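(* Let $I=(p_t)_{t\in[n]}$ be an instance and $\hat I=(\hat p_t)_{t\in[n]}$ a prediction. For every $S\subseteq[n]$, letting $\hat I_S$ be the instance with $t$-th entry $p_t$ for $t\in S$ and $\hat p_t$ for $t\notin S$, we have $\tau([1,n],I,\hat I)\ge\tau([1,n],I,\hat I_S)$ (monotonicity). Moreover $|\mathrm{opt}(I)-\mathrm{opt}(\hat I)|\le\tau([1,n],I,\hat I)$ (Lipschitzness).
   Context: Fix a real parameter $d>0$. An instance is a finite sequence $I=(p_t)_{t\in[T]}$ of nonnegative reals; instances of different lengths are compared by padding with zeros. A solution is a finite set $X=\{x_1<\dots<x_k\}\subseteq[T]$; it is feasible for $I$ if either all $p_t=0$, or $X\ne\emptyset$ and $\max X\ge\max\{t:p_t>0\}$. With $x_0:=0$, $F(I,X)=|X|+\frac1d\sum_{i=1}^{k}\sum_{t=x_{i-1}+1}^{x_i}p_t(x_i-t)$, and $\mathrm{opt}(I)=\min\{F(I,X): X\text{ feasible}\}$. For $a\le b$, the subinstance $I\langle a,b\rangle=(p_t)_{t\in\{a,\dots,b\}}$ is an instance on time set $\{a,\dots,b\}$ (solutions are subsets of $\{a,\dots,b\}$, cost formula with $x_0:=a-1$). For an actual instance $I=(p_t)$ and a predicted instance $\hat I=(\hat p_t)$ on the same time set, the overpredicted instance is $O(I,\hat I)=(\max\{p_t,\hat p_t\})_t$ and the underpredicted instance is $U(I,\hat I)=(\min\{p_t,\hat p_t\})_t$. The auxiliary error on $[t_1,t_2]$ is $\tau([t_1,t_2],I,\hat I)=\mathrm{opt}(O(I\langle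 t_1,t_2\rangle,\hat I\langle t_1,t_2\rangle))-\mathrm{opt}(U(I\langle t_1,t_2\rangle,\hat I\langle t_1,t_2\rangle))$. *)

From HB Require Import structures.
From mathcomp Require Import all_boot all_order all_algebra.
Set Implicit Arguments. Unset Strict Implicit. Unset Printing Implicit Defensive.
Import Order.TTheory GRing.Theory Num.Theory.
Local Open Scope ring_scope.

Section Defs.
Variable R : realFieldType.

(* An instance on time set [1..n] is (n, p) with p : nat -> R, only the
   values p 1, ..., p n matter.  A solution is X : {set 'I_n}, where the
   element i : 'I_n stands for the time (val i).+1. *)

(* cost of the consecutive segments, x_0 := prev *)
Fixpoint segcost (p : nat -> R) (prev : nat) (xs : seq nat) : R :=
  match xs with
  | [::] => 0
  | x :: xs' =>
      (\sum_(prev.+1 <= t < x.+1) p t * (x - t)%:R) + segcost p x xs'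
  end.

Definition times (n : nat) (X : {set 'I_n}) : seq nat :=
  sort leq [seq (val x).+1 | x <- enum X].

Definition cost (d : R) (n : nat) (p : nat -> R) (X : {set 'I_n}) : R :=
  #|X|%:R + d^-1 * segcost p 0 (times X).

Definition feasible (n : nat) (p : nat -> R) (X : {set 'I_n}) : bool :=
  [forall t : 'I_n, p (val t).+1 == 0] ||
  [exists x in X, [forall t : 'I_n, (0 < p (val t).+1) ==> (t <= x)%N]].

(* opt(I) = min of F(I,X) over feasible X (the full set [n] is always
   feasible, so it serves as a harmless seed of the minimum) *)
Definition opt (d : R) (n : nat) (p : nat -> R) : R :=
  \big[Num.min/cost d p [set: 'I_n]]_(X : {set 'I_n} | feasible p X) cost d p X.

(* subinstance I<a,b>, shifted to time set [1 .. b-a+1]; the cost is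
   invariant under this shift since x_0 := a-1 becomes 0 *)
Definition subinst (p : nat -> R) (a : nat) : nat -> R := fun t => p (t + a).-1.

Definition overI (p ph : nat -> R) : nat -> R := fun t => Num.max (p t) (ph t).
Definition underI (p ph : nat -> R) : nat -> R := fun t => Num.min (p t) (ph t).

Definition tau (d : R) (t1 t2 : nat) (p ph : nat -> R) : R :=
  opt d (t2.+1 - t1) (overI (subinst p t1) (subinst ph t1))
  - opt d (t2.+1 - t1) (underI (subinst p t1) (subinst ph t1)).

(* Ih_S : p_t for t in S, ph_t otherwise (S subset of [n], i in S is time i+1) *)
Definition mixS (n : nat) (S : {set 'I_n}) (p ph : nat -> R) : nat -> R :=
  fun t => if [exists i in S, (val i).+1 == t] then p t else ph t.

Definition is_instance (n : nat) (p : nat -> R) : Prop :=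
  forall t, (1 <= t <= n)%N -> 0 <= p t.

End Defs.

From HB Require Import structures.
From mathcomp Require Import all_boot all_order all_algebra.
From mathcomp Require Import lra.
Import Order.TTheory GRing.Theory Num.Theory.
Local Open Scope ring_scope.

(* Both claims follow from one structural fact: for nonnegative instances
   and d >= 0, opt is monotone in the instance, pointwise on [1..n].
   - The cost F(I,X) of a fixed solution is monotone in I (all waiting
     costs have nonnegative weights), while feasibility is antitone in I
     (a larger instance has a larger set of positive times).  Hence the
     minimum over feasible solutions is monotone.
   - On the full range [1,n], tau is opt(max(I,Ih)) - opt(min(I,Ih)).
   - Every instance f lying pointwise between min(I,Ih) and max(I,Ih) thus
     has opt(min) <= opt(f) <= opt(max).  Applied to I and Ih this gives
     Lipschitzness; since max(I,Ih_S) <= max(I,Ih) and min(I,Ih_S) >=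
     min(I,Ih), the same monotonicity gives tau(I,Ih_S) <= tau(I,Ih). *)

Section OptMonotone.
Variables (R : realFieldType) (d : R) (n : nat).
Hypothesis d_ge0 : 0 <= d.

Definition le_on (p q : nat -> R) : Prop :=
  forall t, (1 <= t <= n)%N -> p t <= q t.

Lemma segcost_mono {p q : nat -> R} (xs : seq nat) (prev : nat) :
  le_on p q -> all (fun x => x <= n)%N xs ->
  segcost p prev xs <= segcost q prev xs.
Proof.
move=> hpq; elim: xs prev => [|x xs IH] prev //= /andP [hx hxs].
apply: lerD; last exact: IH.
apply: ler_sum_nat => t /andP [h1 h2].
apply: ler_wpM2r; first exact: ler0n.
apply: hpq; rewrite (leq_trans _ h1) //=.
by apply: leq_trans hx; rewrite -ltnS.
Qed.

Lemma times_le (X : {set 'I_n}) : all (fun x => x <= n)%N (times X).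
Proof.
by apply/allP => x; rewrite /times mem_sort => /mapP [i _ ->]; exact: ltn_ord.
Qed.

Lemma cost_mono {p q : nat -> R} {X : {set 'I_n}} :
  le_on p q -> cost d p X <= cost d q X.
Proof.
move=> hpq; rewrite /cost lerD2l; apply: ler_wpM2l; first by rewrite invr_ge0.
exact: segcost_mono _ 0 hpq (times_le X).
Qed.

(* A solution feasible for a larger instance is feasible for a smaller
   nonnegative one: its positive times are among those of the larger. *)
Lemma feasible_antimono {p q : nat -> R} {X : {set 'I_n}} :
  is_instance n p -> le_on p q -> feasible q X -> feasible p X.
Proof.
move=> hp hpq; have ht (t : 'I_n) : (1 <= (val t).+1 <= n)%N by rewrite /= ltn_ord.
rewrite /feasible => /orP [/forallP q0 | /existsP [x /andP [hx /forallP qle]]].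
  apply/orP; left; apply/forallP => t; rewrite eq_le hp ?ht // andbT.
  by rewrite -(eqP (q0 t)); apply: hpq.
apply/orP; right; apply/existsP; exists x; rewrite hx /=.
apply/forallP => t; apply/implyP => p_pos.
by apply: (implyP (qle t)); exact: lt_le_trans p_pos (hpq _ (ht t)).
Qed.

Lemma opt_le_cost (p : nat -> R) (X : {set 'I_n}) :
  feasible p X -> opt d n p <= cost d p X.
Proof. by move=> hX; rewrite /opt (bigD1 X) //= ge_min lexx. Qed.

Lemma opt_le_seed (p : nat -> R) : opt d n p <= cost d p [set: 'I_n].
Proof. by rewrite /opt; elim/big_rec: _ => // X y _ hy; rewrite ge_min hy orbT. Qed.

Lemma opt_mono (p q : nat -> R) :
  is_instance n p -> le_on p q -> opt d n p <= opt d n q.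
Proof.
move=> hp hpq; rewrite {2}/opt.
apply: (big_ind (fun y => opt d n p <= y)).
- exact: le_trans (opt_le_seed p) (cost_mono hpq).
- by move=> a b ha hb; rewrite le_min ha hb.
- move=> X hX; apply: le_trans (cost_mono hpq).
  exact/opt_le_cost/(feasible_antimono hp hpq).
Qed.

Lemma opt_eq_on (p q : nat -> R) :
  is_instance n p -> (forall t, (1 <= t <= n)%N -> p t = q t) ->
  opt d n p = opt d n q.
Proof.
move=> hp hpq; have hq : is_instance n q by move=> t ht; rewrite -hpq ?hp.
by apply/le_anti; rewrite !opt_mono // => t ht; rewrite hpq.
Qed.

Lemma opt_squeeze (p q f : nat -> R) :
  is_instance n p -> is_instance n q ->
  le_on (underI p q) f -> le_on f (overI p q) ->
  opt d n (underI p q) <= opt d n f <= opt d n (overI p q).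
Proof.
move=> hp hq hlo hhi; have hU : is_instance n (underI p q).
  by move=> t ht; rewrite le_min hp ?hq.
rewrite !opt_mono // => t ht; rewrite (le_trans (hU t ht)) ?hlo //.
Qed.

End OptMonotone.

Lemma choice_between {R : realDomainType} {a b x : R} :
  x = a \/ x = b -> Num.min a b <= x <= Num.max a b.
Proof. by case=> ->; rewrite ge_min le_max lexx ?orbT. Qed.

Lemma tau_full (R : realFieldType) (d : R) (n : nat) (p q : nat -> R) :
  0 <= d -> is_instance n p -> is_instance n q ->
  tau d 1 n p q = opt d n (overI p q) - opt d n (underI p q).
Proof.
move=> d_ge0 hp hq; rewrite /tau subSS subn0.
have shift1 (f : nat -> R) t : subinst f 1 t = f t by rewrite /subinst addn1.
congr (_ - _); apply: (@opt_eq_on _ _ _ d_ge0) => t ht;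
  rewrite /overI /underI ?shift1 //.
- by rewrite le_max hp.
- by rewrite le_min hp ?hq.
Qed.

Theorem mainTheorem3 (R : realFieldType) (d : R) (hd : 0 < d)
  (n : nat) (p ph : nat -> R) (hp : is_instance n p) (hph : is_instance n ph) :
  (forall S : {set 'I_n}, tau d 1 n p (mixS S p ph) <= tau d 1 n p ph) /\
  `|opt d n p - opt d n ph| <= tau d 1 n p ph.
Proof.
have d_ge0 : 0 <= d := ltW hd.
have mix_choice (S : {set 'I_n}) t : mixS S p ph t = p t \/ mixS S p ph t = ph t.
  by rewrite /mixS; case: ifP => _; [left|right].
have mix_inst (S : {set 'I_n}) : is_instance n (mixS S p ph).
  by move=> t ht; case: (mix_choice S t) => ->; [apply: hp|apply: hph].
have opt_between (f : nat -> R) : (forall t, f t = p t \/ f t = ph t) ->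
    opt d n (underI p ph) <= opt d n f <= opt d n (overI p ph).
  move=> hf; apply: opt_squeeze => // t _;
  by have /andP [lo hi] := choice_between (hf t).
rewrite tau_full //; split=> [S|].
  rewrite tau_full //; apply: lerB; apply: opt_mono => // t ht;
    have /andP [lo hi] := choice_between (mix_choice S t).
  - by rewrite le_max hp.
  - by rewrite /overI ge_max le_max lexx hi.
  - by rewrite le_min hp ?hph.
  - by rewrite /underI le_min ge_min lexx lo.
have /andP [p_lo p_hi] := opt_between p (fun t => or_introl erefl).
have /andP [q_lo q_hi] := opt_between ph (fun t => or_intror erefl).
rewrite ler_norml; apply/andP; split; lra.
Qed.
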